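(* The set $R_{1,1,1}$ of Riordan matrices whose $A$-sequence has the form $(1,a_1,a_2,\ldots)$ and whose $Z$-sequence has the form $(z_0,0,z_2,\ldots)$ with $z_0=a_1$ (i.e. $a_0=1$, $z_0=a_1$, $z_1=0$) is a subgroup of the Riordan group.
   Context: Let $K$ be $\mathbb{R}$ or $\mathbb{C}$. A (proper) Riordan matrix is a pair $(g,f)$ of formal power series in $K[[t]]$ with $g(0)=1$, $f(0)=0$, $f'(0)\neq 0$ (the normalization $g(0)=1$ is a standing assumption), identified with the lower triangular matrix with entries $[t^n]g(t)f(t)^k$. The Riordan group is the set of these matrices under matrix multiplication, $(g_1,f_1)(g_2,f_2)=(g_1\,g_2(f_1),\,f_2(f_1))$, with identity $(1,t)$. The $A$-sequence $(a_j)$ of $(g,f)$ is the unique sequence whose generating function $A(t)$ satisfies $f(t)=tA(f(t))$; the $Z$-sequence $(z_j)$ is the unique sequence whose generating function $Z(t)$ satisfies $g(t)=1/(1-tZ(f(t)))$. *)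

From mathcomp Require Import all_boot all_order all_algebra.
Set Implicit Arguments. Unset Strict Implicit. Unset Printing Implicit Defensive.
Import GRing.Theory Num.Theory.
Local Open Scope ring_scope.

Section FPS.
Variable K : numFieldType.

Definition ps := nat -> K.

Definition ps1 : ps := fun n => (n == 0%N)%:R.
Definition psX : ps := fun n => (n == 1%N)%:R.
Definition pssub (a b : ps) : ps := fun n => a n - b n.
Definition psmul (a b : ps) : ps :=
  fun n => \sum_(i < n.+1) a i * b (n - i)%N.
Definition pspow (a : ps) (k : nat) : ps := iter k (psmul a) ps1.
(* composition g(f); used only for f with f 0 = 0, in which case
   [t^n] f^k = 0 for k > n, so the finite sum is the exact coefficient *)
Definition pscomp (g f : ps) : ps :=
  fun n => \sum_(k < n.+1) g k * pspow f k n.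

Definition riordan (p : ps * ps) : Prop :=
  p.1 0%N = 1 /\ p.2 0%N = 0 /\ p.2 1%N != 0.

Definition riordan_mul (p q : ps * ps) : ps * ps :=
  (psmul p.1 (pscomp q.1 p.2), pscomp q.2 p.2).

Definition riordan_id : ps * ps := (ps1, psX).

Definition is_Aseq (f A : ps) : Prop := f = psmul psX (pscomp A f).

(* Z is the Z-sequence of (g,f) : g(t) = 1/(1 - t Z(f(t))),
   i.e. g(t) * (1 - t Z(f(t))) = 1 *)
Definition is_Zseq (g f Z : ps) : Prop :=
  psmul g (pssub ps1 (psmul psX (pscomp Z f))) = ps1.

Definition R111 (p : ps * ps) : Prop :=
  riordan p /\
  exists A Z : ps, [/\ is_Aseq p.2 A, is_Zseq p.1 p.2 Z,
                       A 0%N = 1, Z 0%N = A 1%N & Z 1%N = 0].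
End FPS.

(* The A- and Z-sequences of a proper Riordan pair always exist: the equations
   f = t A(f) and g (1 - t Z(f)) = 1 are triangular systems for their
   coefficients, with pivots g(0) and the powers of f'(0).  Solving for the first few
   coefficients, (g, f) lies in R_{1,1,1} exactly when f_1 = 1, g_1 = f_2 and
   g_2 = g_1^2.  Membership is thus a condition on the 2-jet of (g, f), and
   the 2-jets of a product are explicit polynomials in those of the factors,
   from which closure under products and inverses is a direct computation. *)
From mathcomp Require Import all_boot all_order all_algebra.
From mathcomp Require Import ring zify.
From Stdlib Require Import FunctionalExtensionality.
Set Implicit Arguments. Unset Strict Implicit. Unset Printing Implicit Defensive.
Import GRing.Theory Num.Theory.
Local Open Scope ring_scope.

Section CausalFixpoint.
Variables (T : Type) (x0 : T) (step : (nat -> T) -> nat -> T).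
Hypothesis step_causal :
  forall a b n, (forall i, (i < n)%N -> a i = b i) -> step a n = step b n.

Fixpoint causal_prefix n : seq T :=
  if n is m.+1 then rcons (causal_prefix m) (step (nth x0 (causal_prefix m)) m)
  else [::].

Definition causal_fix m := step (nth x0 (causal_prefix m)) m.

Lemma size_causal_prefix n : size (causal_prefix n) = n.
Proof. by elim: n => //= n IH; rewrite size_rcons IH. Qed.

Lemma nth_causal_prefix n i : (i < n)%N -> nth x0 (causal_prefix n) i = causal_fix i.
Proof.
elim: n => // n IH lt_in; rewrite /= nth_rcons size_causal_prefix.
case: ltnP => [/IH // | le_ni]; have -> : i = n by lia.
by rewrite eqxx.
Qed.

Lemma causal_fixpoint : exists a, forall n, a n = step a n.
Proof. by exists causal_fix => n; apply: step_causal => i; apply: nth_causal_prefix. Qed.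
End CausalFixpoint.

Section PowerSeries.
Variable K : numFieldType.
Implicit Types (f g a b c : ps K) (p q : ps K * ps K).

Lemma psmul_coef0 a b : psmul a b 0%N = a 0%N * b 0%N.
Proof. by rewrite /psmul big_ord1. Qed.

Lemma psmul_coef1 a b : psmul a b 1%N = a 0%N * b 1%N + a 1%N * b 0%N.
Proof. by rewrite /psmul !big_ord_recr big_ord0 /= add0r. Qed.

Lemma psmul_coef2 a b :
  psmul a b 2%N = a 0%N * b 2%N + a 1%N * b 1%N + a 2%N * b 0%N.
Proof. by rewrite /psmul !big_ord_recr big_ord0 /= add0r. Qed.

Lemma psmulr1 a n : psmul a (ps1 K) n = a n.
Proof.
rewrite /psmul big_ord_recr big1 /= ?subnn ?mulr1 ?add0r // => i _.
by rewrite /ps1 subn_eq0 leqNgt ltn_ord mulr0.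
Qed.

Lemma psXmul0 b : psmul (psX K) b 0%N = 0.
Proof. by rewrite psmul_coef0 mul0r. Qed.

Lemma psXmulS b n : psmul (psX K) b n.+1 = b n.
Proof.
rewrite /psmul big_ord_recl big_ord_recl big1 => [|i _]; last by rewrite mul0r.
by rewrite /psX /= mul0r mul1r add0r addr0 subn1.
Qed.

Lemma psmul_subX_coefS g b n :
  psmul g (pssub (ps1 K) (psmul (psX K) b)) n.+1 = g n.+1 - psmul g b n.
Proof.
rewrite {1}/psmul big_ord_recr /= subnn /pssub psXmul0 subr0 mulr1 addrC.
rewrite [psmul g b n]/psmul -sumrN; congr (_ + _); apply: eq_bigr => i _.
rewrite subSn; last by rewrite -ltnS.
by rewrite psXmulS /ps1 sub0r mulrN.
Qed.

Lemma pspowS f k : pspow f k.+1 = psmul f (pspow f k).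
Proof. by []. Qed.

Lemma pspow_lt f k n : f 0%N = 0 -> (n < k)%N -> pspow f k n = 0.
Proof.
move=> f0; elim: k n => // k IH n lt_nk.
rewrite pspowS /psmul big1 // => -[[|i] lt_in] _ /=; first by rewrite f0 mul0r.
by rewrite IH ?mulr0 //; lia.
Qed.

Lemma pspow_diag f n : f 0%N = 0 -> pspow f n n = f 1%N ^+ n.
Proof.
move=> f0; elim: n => [|n IH]; first by rewrite expr0.
rewrite pspowS /psmul big_ord_recl f0 mul0r add0r big_ord_recl /= subn1 /=.
rewrite IH big1 ?addr0 ?exprS // => i _.
by rewrite pspow_lt ?mulr0 //; rewrite /bump /=; have := ltn_ord i; lia.
Qed.

Lemma pscomp_coef0 a f : pscomp a f 0%N = a 0%N.
Proof. by rewrite /pscomp big_ord1 /pspow /= mulr1. Qed.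

Lemma pscomp_coef1 a f : f 0%N = 0 -> pscomp a f 1%N = a 1%N * f 1%N.
Proof.
move=> f0; rewrite /pscomp !big_ord_recr big_ord0 /= add0r.
by rewrite psmulr1 /ps1 /= mulr0 add0r.
Qed.

Lemma pscomp_coef2 a f : f 0%N = 0 ->
  pscomp a f 2%N = a 1%N * f 2%N + a 2%N * f 1%N ^+ 2.
Proof.
move=> f0; rewrite /pscomp !big_ord_recr big_ord0 /= add0r -(pspow_diag 2 f0).
by rewrite psmulr1 /ps1 /= mulr0 add0r.
Qed.

Lemma psmul_solve g c : g 0%N != 0 -> exists b, psmul g b = c.
Proof.
move=> g0; pose step b n := (c n - \sum_(i < n) g i.+1 * b (n - i.+1)%N) / g 0%N.
have [b Hb] : exists b, forall n, b n = step b n.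
  apply: (causal_fixpoint 0) => a a' n eq_aa'; congr ((_ - _) / _).
  by apply: eq_bigr => i _; rewrite eq_aa' //; have := ltn_ord i; lia.
exists b; apply: functional_extensionality => n.
by rewrite /psmul big_ord_recl subn0 mulrC Hb divfK // subrK.
Qed.

Lemma pscomp_solve f c : f 0%N = 0 -> f 1%N != 0 -> exists b, pscomp b f = c.
Proof.
move=> f0 f1; pose step b n := (c n - \sum_(k < n) b k * pspow f k n) / f 1%N ^+ n.
have [b Hb] : exists b, forall n, b n = step b n.
  apply: (causal_fixpoint 0) => a a' n eq_aa'; congr ((_ - _) / _).
  by apply: eq_bigr => k _; rewrite eq_aa'.
exists b; apply: functional_extensionality => n.
rewrite /pscomp big_ord_recr /= pspow_diag // Hb divfK ?expf_neq0 //.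
by rewrite addrC subrK.
Qed.

Lemma Aseq_exists f : f 0%N = 0 -> f 1%N != 0 -> exists A, is_Aseq f A.
Proof.
move=> f0 f1; have [A HA] := pscomp_solve (fun n => f n.+1) f0 f1.
exists A; apply: functional_extensionality => -[|n].
  by rewrite psXmul0.
by rewrite psXmulS HA.
Qed.

Lemma Zseq_exists g f : g 0%N = 1 -> f 0%N = 0 -> f 1%N != 0 ->
  exists Z, is_Zseq g f Z.
Proof.
move=> g0 f0 f1; have g0_neq0 : g 0%N != 0 by rewrite g0 oner_neq0.
(* Z(f) must be the series b with g b = (g - 1) / t. *)
have [b Hb] := psmul_solve (fun n => g n.+1) g0_neq0.
have [Z HZ] := pscomp_solve b f0 f1.
exists Z; apply: functional_extensionality => -[|n].
  by rewrite psmul_coef0 /pssub psXmul0 g0 subr0 mulr1.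
by rewrite psmul_subX_coefS HZ Hb subrr.
Qed.

Lemma Aseq_coef f A : is_Aseq f A -> f 1%N = A 0%N /\ f 2%N = A 1%N * f 1%N.
Proof.
move=> HA; have f0 : f 0%N = 0 by rewrite HA psXmul0.
have coefS n : f n.+1 = pscomp A f n by rewrite {1}HA psXmulS.
by rewrite [f 2%N]coefS pscomp_coef1 // coefS pscomp_coef0.
Qed.

Lemma Zseq_coef g f Z : g 0%N = 1 -> f 0%N = 0 -> is_Zseq g f Z ->
  g 1%N = Z 0%N /\ g 2%N = g 1%N * Z 0%N + Z 1%N * f 1%N.
Proof.
move=> g0 f0 HZ; have coefS n : g n.+1 = psmul g (pscomp Z f) n.
  by apply/eqP; rewrite -subr_eq0 -psmul_subX_coefS HZ.
split; first by rewrite coefS psmul_coef0 pscomp_coef0 g0 mul1r.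
by rewrite coefS psmul_coef1 pscomp_coef0 pscomp_coef1 // g0 mul1r addrC.
Qed.

Lemma R111E p : R111 p <->
  [/\ riordan p, p.2 1%N = 1, p.1 1%N = p.2 2%N & p.1 2%N = p.1 1%N ^+ 2].
Proof.
case: p => g f; split.
  move=> [[/= g0 [f0 f1]] [A [Z [/Aseq_coef [fA1 fA2] /(Zseq_coef g0 f0) [gZ1 gZ2]
                                   A0 Z0 Z1]]]] /=.
  have f1E : f 1%N = 1 by rewrite fA1 A0.
  have g1E : g 1%N = f 2%N by rewrite gZ1 Z0 fA2 f1E mulr1.
  by split=> //; rewrite gZ2 Z1 mul0r addr0 -gZ1 expr2.
move=> [[/= g0 [f0 f1]] /= f1E g1E g2E]; split=> //.
have [A /[dup] HA /Aseq_coef [fA1 fA2]] := Aseq_exists f0 f1.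
have [Z /[dup] HZ /(Zseq_coef g0 f0) [gZ1 gZ2]] := Zseq_exists g0 f0 f1.
exists A, Z; split=> //; first by rewrite -fA1.
  by rewrite -gZ1 g1E fA2 f1E mulr1.
by move: gZ2; rewrite g2E -gZ1 f1E mulr1 expr2 -{1}[_ * _]addr0 => /addrI.
Qed.

Lemma riordan_mul_closed p q : riordan p -> riordan q -> riordan (riordan_mul p q).
Proof.
case: p q => g f [d h] [/= g0 [f0 f1]] [/= d0 [h0 h1]]; rewrite /riordan /=.
by rewrite psmul_coef0 !pscomp_coef0 pscomp_coef1 // g0 d0 mulr1 h0 mulf_neq0.
Qed.

Lemma riordan_mul_coef p q : riordan p -> riordan q ->
  [/\ (riordan_mul p q).1 1%N = p.1 1%N + q.1 1%N * p.2 1%N,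
      (riordan_mul p q).1 2%N = p.1 2%N + p.1 1%N * q.1 1%N * p.2 1%N
                                + q.1 1%N * p.2 2%N + q.1 2%N * p.2 1%N ^+ 2,
      (riordan_mul p q).2 1%N = q.2 1%N * p.2 1%N
    & (riordan_mul p q).2 2%N = q.2 1%N * p.2 2%N + q.2 2%N * p.2 1%N ^+ 2].
Proof.
case: p q => g f [d h] [/= g0 [f0 _]] [/= d0 _]; rewrite /riordan_mul /=.
rewrite psmul_coef1 psmul_coef2 !pscomp_coef0 !pscomp_coef1 // !pscomp_coef2 //.
by rewrite g0 d0; split; ring.
Qed.

Lemma R111_id : R111 (riordan_id K).
Proof.
apply/R111E; rewrite /riordan_id /riordan /ps1 /psX /=.
by rewrite expr2 mulr0 oner_neq0.
Qed.

Lemma R111_mul p q : R111 p -> R111 q -> R111 (riordan_mul p q).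
Proof.
move=> /R111E [Rp f1 g1 g2] /R111E [Rq h1 d1 d2]; apply/R111E.
have [m1 m2 m3 m4] := riordan_mul_coef Rp Rq.
split; first exact: riordan_mul_closed.
- by rewrite m3 h1 f1 mulr1.
- by rewrite m1 m4 f1 h1 g1 d1 !expr1n !mulr1 mul1r.
- by rewrite m1 m2 f1 g2 d2 -g1 !expr1n !mulr1; ring.
Qed.

Lemma R111_inv p q : R111 p -> riordan q -> riordan_mul p q = riordan_id K -> R111 q.
Proof.
move=> /R111E [Rp f1 g1 g2] Rq pq1; apply/R111E.
have [m1 m2 m3 m4] := riordan_mul_coef Rp Rq.
rewrite pq1 /riordan_id /ps1 /psX /= f1 !expr1n !mulr1 in m1 m2 m3 m4.
have h1 : q.2 1%N = 1 by rewrite -m3.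
have d1 : q.1 1%N = - p.2 2%N by rewrite -g1 (addr0_eq (esym m1)).
split=> //.
  by rewrite d1 -(addr0_eq (esym m4)) h1 mul1r.
by apply/subr0_eq; rewrite [RHS]m2 d1 g2 g1; ring.
Qed.
End PowerSeries.

Theorem theorem4p4 (K : numFieldType) :
  [/\ R111 (riordan_id K),
      (forall p q : ps K * ps K, R111 p -> R111 q -> R111 (riordan_mul p q))
    & (forall p q : ps K * ps K, R111 p -> riordan q ->
         riordan_mul p q = riordan_id K -> riordan_mul q p = riordan_id K ->
         R111 q)].
Proof.
split; [exact: R111_id | exact: R111_mul |].
by move=> p q Rp Rq pq1 _; apply: R111_inv Rp Rq pq1.
Qed.
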